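(* Let $\mathbf{A}\in\mathbb{R}^{M\times N}$, $\mathbf{Y}\in\mathbb{R}^{M\times L}$, and let $(\mathbf{g}(t),\mathbf{V}(t))$, $t\ge0$, evolve under the continuous gradient flow of $\mathcal{L}(\mathbf{g},\mathbf{V})=\Vert\mathbf{Y}-\mathbf{A}((\mathbf{g}^{\odot 2}\mathbf{1}_L)\odot\mathbf{V})\Vert_F^2$ with initialization $\mathbf{g}(0)$ having all entries equal to $\alpha_g$ and $\mathbf{V}(0)=\alpha_V\mathbf{1}_{N\times L}$, where $\alpha_g,\alpha_V$ are small positive scalars. Let $\mathbf{X}(t)=(\mathbf{g}(t)^{\odot 2}\mathbf{1}_L)\odot\mathbf{V}(t)$, $\boldsymbol{\Lambda}(t)=\mathbf{A}^\top(\mathbf{Y}-\mathbf{A}\mathbf{X}(t))$, $\boldsymbol{\lambda}_i(t)$ the $i$-th row of $\boldsymbol{\Lambda}(t)$, and $\hat{\mathbf{x}}_i(t)=\mathbf{X}_{i:}(t)/\Vert\mathbf{X}_{i:}(t)\Vert_2$ if $\Vert\mathbf{X}_{i:}(t)\Vert_2\ne0$ and $\hat{\mathbf{x}}_i(t)=\mathbf{0}$ otherwise. Let $\epsilon=\left|\frac12\Vert\mathbf{g}(t)\Vert_2^2-\Vert\mathbf{V}(t)\Vert_F^2\right|$ (which is independent of $t$). Then for any $t\ge0$ and all $i\in[N]$ with $g_i^2(t)>0$ and $\sum_{m\in[L]}V_{im}^2(t)>0$: if $\langle\boldsymbol{\lambda}_i(t),\hat{\mathbf{x}}_i(t)\rangle\ge0$,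 then $$\frac{d}{dt}\Vert\mathbf{X}_{i:}(t)\Vert_2\le 24\langle\boldsymbol{\lambda}_i(t),\hat{\mathbf{x}}_i(t)\rangle\left(\epsilon+\Vert\mathbf{X}_{i:}(t)\Vert_2^{2/3}\right)^2,\qquad \frac{d}{dt}\Vert\mathbf{X}_{i:}(t)\Vert_2\ge 6\langle\boldsymbol{\lambda}_i(t),\hat{\mathbf{x}}_i(t)\rangle\frac{\Vert\mathbf{X}_{i:}(t)\Vert_2^2}{\epsilon+\Vert\mathbf{X}_{i:}(t)\Vert_2^{2/3}};$$ if $\langle\boldsymbol{\lambda}_i(t),\hat{\mathbf{x}}_i(t)\rangle<0$, then $$\frac{d}{dt}\Vert\mathbf{X}_{i:}(t)\Vert_2\ge 24\langle\boldsymbol{\lambda}_i(t),\hat{\mathbf{x}}_i(t)\rangle\left(\epsilon+\Vert\mathbf{X}_{i:}(t)\Vert_2^{2/3}\right)^2,\qquad \frac{d}{dt}\Vert\mathbf{X}_{i:}(t)\Vert_2\le 6\langle\boldsymbol{\lambda}_i(t),\hat{\mathbf{x}}_i(t)\rangle\frac{\Vert\mathbf{X}_{i:}(t)\Vert_2^2}{\epsilon+\Vert\mathbf{X}_{i:}(t)\Vert_2^{2/3}}.$$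
   Context: $\odot$ is the entrywise product, $\mathbf{1}_L$ the $1\times L$ all-ones row vector, $\mathbf{1}_{N\times L}$ the all-ones matrix, so $X_{ij}=g_i^2V_{ij}$; $\mathbf{X}_{i:}$ denotes the $i$-th row. Gradient flow: $\frac{d}{dt}g_l=-\partial\mathcal{L}/\partial g_l$ and $\frac{d}{dt}V_{lm}=-\partial\mathcal{L}/\partial V_{lm}$ evaluated along the curve. *)

From HB Require Import structures.
From mathcomp Require Import all_boot all_order all_algebra.
From mathcomp Require Import all_classical all_reals all_analysis.
Set Implicit Arguments. Unset Strict Implicit. Unset Printing Implicit Defensive.
Import Order.TTheory GRing.Theory Num.Theory.
Local Open Scope ring_scope.

Section Defs.
Variable R : realType.

Definition frob2 (m n : nat) (B : 'M[R]_(m, n)) : R :=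
  \sum_(i < m) \sum_(j < n) B i j ^+ 2.

Definition Xof (N L : nat) (g : 'cV[R]_N) (V : 'M[R]_(N, L)) : 'M[R]_(N, L) :=
  \matrix_(i, j) (g i 0 ^+ 2 * V i j).

Definition loss (M N L : nat) (A : 'M[R]_(M, N)) (Y : 'M[R]_(M, L))
  (g : 'cV[R]_N) (V : 'M[R]_(N, L)) : R :=
  frob2 (Y - A *m Xof g V).

Definition dloss_dg (M N L : nat) (A : 'M[R]_(M, N)) (Y : 'M[R]_(M, L))
  (g : 'cV[R]_N) (V : 'M[R]_(N, L)) (l : 'I_N) : R :=
  derive1 (fun s : R => loss A Y (g + s *: delta_mx l 0) V) 0.

Definition dloss_dV (M N L : nat) (A : 'M[R]_(M, N)) (Y : 'M[R]_(M, L))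
  (g : 'cV[R]_N) (V : 'M[R]_(N, L)) (l : 'I_N) (m : 'I_L) : R :=
  derive1 (fun s : R => loss A Y g (V + s *: delta_mx l m)) 0.

Definition gradient_flow (M N L : nat) (A : 'M[R]_(M, N)) (Y : 'M[R]_(M, L))
  (g : R -> 'cV[R]_N) (V : R -> 'M[R]_(N, L)) : Prop :=
  forall t : R, 0 <= t ->
    (forall l : 'I_N,
       is_derive t (1 : R) (fun s => g s l 0) (- dloss_dg A Y (g t) (V t) l)) /\
    (forall (l : 'I_N) (m : 'I_L),
       is_derive t (1 : R) (fun s => V s l m) (- dloss_dV A Y (g t) (V t) l m)).

Definition rownorm (N L : nat) (X : 'M[R]_(N, L)) (i : 'I_N) : R :=
  Num.sqrt (\sum_(j < L) X i j ^+ 2).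

Definition xhat (N L : nat) (X : 'M[R]_(N, L)) (i : 'I_N) : 'rV[R]_L :=
  if rownorm X i != 0 then \row_j (X i j / rownorm X i) else 0.

Definition Lambda (M N L : nat) (A : 'M[R]_(M, N)) (Y : 'M[R]_(M, L))
  (X : 'M[R]_(N, L)) : 'M[R]_(N, L) :=
  A^T *m (Y - A *m X).

Definition inner (L : nat) (u v : 'rV[R]_L) : R := \sum_(j < L) u 0 j * v 0 j.

Definition eps (N L : nat) (g : 'cV[R]_N) (V : 'M[R]_(N, L)) : R :=
  `| 2^-1 * frob2 g - frob2 V |.

End Defs.

From HB Require Import structures.
From mathcomp Require Import all_boot all_order all_algebra.
From mathcomp Require Import all_classical all_reals all_analysis.
From mathcomp Require Import ring lra.
Set Implicit Arguments. Unset Strict Implicit.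
Import Order.TTheory GRing.Theory Num.Theory.
Local Open Scope ring_scope.

(* Write a = g_i^2 and b = ||V_i:||^2, so that ||X_i:|| = a sqrt b. Along the
   flow g_i' = 4 g_i <lambda_i, V_i:> and V_i:' = 2 a lambda_i, hence
   d/dt ||X_i:|| = <lambda_i, xhat_i> (2 a^2 + 8 a b). Each row balance
   a/2 - b is conserved; the uniform initialization makes all of them equal,
   so |a/2 - b| <= eps. With p = ||X_i:||^(2/3), i.e. p^3 = a^2 b, both bounds
   reduce to 2 a^2 + 8 a b <= 24 (eps + p)^2 and
   6 a^2 b <= (2 a^2 + 8 a b)(eps + p), which follow by comparing b with a/8
   and a/2: for b >= a/8 one has p >= a/2, and for b < a/8, eps >= 3a/8. *)

Lemma cube_root_ge_half (R : realFieldType) (a b p : R) :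
  0 < a -> 0 <= p -> p ^+ 3 = a ^+ 2 * b -> a / 8 <= b -> a / 2 <= p.
Proof.
move=> a_gt0 p_ge0 p3 b_ge; rewrite -(ler_pXn2r (n := 3)) ?nnegrE //; last lra.
have : 0 <= a ^+ 2 * (b - a / 8) by apply: mulr_ge0; [exact: sqr_ge0 | lra].
nra.
Qed.

Lemma cube_root_ge_three_quarters (R : realFieldType) (a b p : R) :
  0 < a -> 0 <= p -> p ^+ 3 = a ^+ 2 * b -> a / 2 <= b -> 3 * a / 4 <= p.
Proof.
move=> a_gt0 p_ge0 p3 b_ge; rewrite -(ler_pXn2r (n := 3)) ?nnegrE //; last lra.
have : 0 <= a ^+ 2 * (b - a / 2) by apply: mulr_ge0; [exact: sqr_ge0 | lra].
have : 0 <= a ^+ 3 by rewrite exprn_ge0 // ltW.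
nra.
Qed.

Lemma growth_rate_le (R : realFieldType) (a b e p : R) :
  0 < a -> 0 < b -> 0 <= p -> p ^+ 3 = a ^+ 2 * b -> `|a / 2 - b| <= e ->
  2 * a ^+ 2 + 8 * a * b <= 24 * (e + p) ^+ 2.
Proof.
move=> a_gt0 b_gt0 p_ge0 p3; rewrite ler_norml => /andP[e1 e2].
have e_ge0 : 0 <= e by lra.
have : 0 <= a * (a / 2 + e - b) by apply: mulr_ge0; lra.
have : 0 <= e * p by exact: mulr_ge0.
have [b_ge|b_lt] := lerP (a / 8) b.
  have := cube_root_ge_half a_gt0 p_ge0 p3 b_ge.
  nra.
nra.
Qed.

Lemma growth_rate_ge (R : realFieldType) (a b e p : R) :
  0 < a -> 0 < b -> 0 <= p -> p ^+ 3 = a ^+ 2 * b -> `|a / 2 - b| <= e ->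
  6 * (a ^+ 2 * b) <= (2 * a ^+ 2 + 8 * a * b) * (e + p).
Proof.
move=> a_gt0 b_gt0 p_ge0 p3; rewrite ler_norml => /andP[e1 e2].
suff : 6 * a * b <= (2 * a + 8 * b) * (e + p) by nra.
have [b_ge|b_lt] := lerP (a / 8) b; last by nra.
have [b_ge2|b_lt2] := lerP (a / 2) b.
  have := cube_root_ge_three_quarters a_gt0 p_ge0 p3 b_ge2.
  nra.
have := cube_root_ge_half a_gt0 p_ge0 p3 b_ge.
nra.
Qed.

Lemma signed_rate_bounds (R : realFieldType) (c K q u : R) :
  0 < q -> K <= 24 * q ^+ 2 -> 6 * u <= K * q ->
  (0 <= c -> c * K <= 24 * c * q ^+ 2 /\ 6 * c * (u / q) <= c * K) /\
  (c < 0 -> 24 * c * q ^+ 2 <= c * K /\ c * K <= 6 * c * (u / q)).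
Proof.
move=> q_gt0 K_le K_ge.
have : 6 * (u / q) <= K by rewrite mulrA ler_pdivrMr.
by split=> c_sgn; split; nra.
Qed.

Lemma powR_two_thirds_cube (R : realType) (r : R) :
  0 <= r -> (r `^ (2 / 3)) ^+ 3 = r ^+ 2.
Proof.
move=> r_ge0; rewrite -powR_mulrn ?powR_ge0 // -powRrM.
have -> : 2 / 3 * 3%:R = 2%:R :> R by field.
exact: powR_mulrn.
Qed.

Section LossGradient.
Variable R : realType.

Definition frob_dot m n (B C : 'M[R]_(m, n)) : R := \sum_i \sum_j B i j * C i j.

Lemma frob_dot_trace m n (B C : 'M[R]_(m, n)) : frob_dot B C = \tr (B^T *m C).
Proof.
rewrite /frob_dot /mxtrace exchange_big; apply: eq_bigr => j _.
by rewrite mxE; apply: eq_bigr => i _; rewrite mxE.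
Qed.

Lemma frob_dot_mulmx m n p (E : 'M[R]_(m, p)) (A : 'M[R]_(m, n))
    (C : 'M[R]_(n, p)) :
  frob_dot E (A *m C) = frob_dot (A^T *m E) C.
Proof. by rewrite !frob_dot_trace trmx_mul trmxK mulmxA. Qed.

Lemma frob2_subZ m n (E B : 'M[R]_(m, n)) (k : R) :
  frob2 (E - k *: B) = frob2 E - 2 * k * frob_dot E B + k ^+ 2 * frob2 B.
Proof.
rewrite /frob2 /frob_dot !mulr_sumr -sumrB -big_split /=; apply: eq_bigr => i _.
rewrite !mulr_sumr -sumrB -big_split /=; apply: eq_bigr => j _.
by rewrite !mxE; ring.
Qed.

Lemma derive1_frob2_subZ m n (E B : 'M[R]_(m, n)) (phi : R -> R) (k : R) :
  phi 0 = 0 -> is_derive (0 : R) 1 phi k ->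
  derive1 (fun s => frob2 (E - phi s *: B)) 0 = - 2 * k * frob_dot E B.
Proof.
move=> phi0 dphi; under eq_fun do rewrite frob2_subZ.
by rewrite derive1E derive_val phi0 /GRing.scale /=; ring.
Qed.

Lemma frob_dot_Xof_deltar n p (B : 'M[R]_(n, p)) (g : 'cV[R]_n) l m :
  frob_dot B (Xof g (delta_mx l m)) = g l 0 ^+ 2 * B l m.
Proof.
rewrite /frob_dot (bigD1 l) //= [X in _ + X]big1 ?addr0; last first.
  by move=> i /negbTE il; apply: big1 => j _; rewrite !mxE il /=; ring.
rewrite (bigD1 m) //= big1 ?addr0; last first.
  by move=> j /negbTE jm; rewrite !mxE jm andbF /=; ring.
by rewrite !mxE !eqxx /=; ring.
Qed.

Lemma frob_dot_Xof_deltal n p (B V : 'M[R]_(n, p)) l :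
  frob_dot B (Xof (delta_mx l 0) V) = \sum_j B l j * V l j.
Proof.
rewrite /frob_dot (bigD1 l) //= [X in _ + X]big1 ?addr0; last first.
  by move=> i /negbTE il; apply: big1 => j _; rewrite !mxE il /=; ring.
apply: eq_bigr => j _; rewrite !mxE !eqxx /=; ring.
Qed.

Lemma XofDZr n p (g : 'cV[R]_n) (V W : 'M[R]_(n, p)) (k : R) :
  Xof g (V + k *: W) = Xof g V + k *: Xof g W.
Proof. by apply/matrixP => i j; rewrite !mxE; ring. Qed.

Lemma XofDZl n p (g : 'cV[R]_n) (V : 'M[R]_(n, p)) l (s : R) :
  Xof (g + s *: delta_mx l 0) V =
  Xof g V + (2 * s * g l 0 + s ^+ 2) *: Xof (delta_mx l 0) V.
Proof.
apply/matrixP => i j; rewrite !mxE.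
by case: (eqVneq i l) => [->|_] /=; ring.
Qed.

Lemma loss_shift M N L (A : 'M[R]_(M, N)) (Y : 'M[R]_(M, L)) g V g' V' C
    (k : R) :
  Xof g' V' = Xof g V + k *: C ->
  loss A Y g' V' = frob2 ((Y - A *m Xof g V) - k *: (A *m C)).
Proof. by rewrite /loss => ->; rewrite mulmxDr scalemxAr opprD addrA. Qed.

Lemma dloss_dVE M N L (A : 'M[R]_(M, N)) (Y : 'M[R]_(M, L)) g V l m :
  dloss_dV A Y g V l m = - 2 * (g l 0 ^+ 2 * Lambda A Y (Xof g V) l m).
Proof.
rewrite /dloss_dV; under eq_fun do rewrite (loss_shift _ _ (XofDZr _ _ _ _)).
rewrite (derive1_frob2_subZ _ _ (phi := id)) //.
by rewrite frob_dot_mulmx frob_dot_Xof_deltar; ring.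
Qed.

Lemma dloss_dgE M N L (A : 'M[R]_(M, N)) (Y : 'M[R]_(M, L)) g V l :
  dloss_dg A Y g V l = - 4 * (g l 0 * \sum_j Lambda A Y (Xof g V) l j * V l j).
Proof.
rewrite /dloss_dg; under eq_fun do rewrite (loss_shift _ _ (XofDZl _ _ _ _)).
have dphi : is_derive (0 : R) 1 (fun s => 2 * s * g l 0 + s ^+ 2) (2 * g l 0).
  by apply: is_derive_eq; rewrite /GRing.scale /=; ring.
rewrite (derive1_frob2_subZ _ _ _ dphi) /=; last ring.
by rewrite frob_dot_mulmx frob_dot_Xof_deltal /Lambda; ring.
Qed.
End LossGradient.

Section RowQuantities.
Variable R : realType.

Definition row_balance N L (g : 'cV[R]_N) (V : 'M[R]_(N, L)) (k : 'I_N) : R :=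
  2^-1 * g k 0 ^+ 2 - \sum_j V k j ^+ 2.

Lemma eps_row_balance N L (g : 'cV[R]_N) (V : 'M[R]_(N, L)) :
  eps g V = `|\sum_k row_balance g V k|.
Proof.
rewrite /eps /frob2 mulr_sumr -sumrB; congr `|_|; apply: eq_bigr => k _.
by rewrite big_ord1.
Qed.

Lemma row_balance_le_eps N L (g : 'cV[R]_N) (V : 'M[R]_(N, L)) i :
  (forall k, row_balance g V k = row_balance g V i) ->
  `|row_balance g V i| <= eps g V.
Proof.
move=> balanced; rewrite eps_row_balance (eq_bigr _ (fun k _ => balanced k)).
rewrite sumr_const card_ord normrMn -mulr_natr ler_peMr // ler1n.
exact: leq_ltn_trans (ltn_ord i).
Qed.

Lemma rownorm_Xof N L (g : 'cV[R]_N) (V : 'M[R]_(N, L)) i :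
  rownorm (Xof g V) i = g i 0 ^+ 2 * Num.sqrt (\sum_j V i j ^+ 2).
Proof.
rewrite /rownorm; under eq_bigr do rewrite mxE exprMn.
by rewrite -mulr_sumr sqrtrM ?sqr_ge0 // sqrtr_sqr ger0_norm ?sqr_ge0.
Qed.

Lemma inner_row_xhat_Xof N L (B : 'M[R]_(N, L)) (g : 'cV[R]_N)
    (V : 'M[R]_(N, L)) i :
  0 < g i 0 ^+ 2 -> 0 < \sum_j V i j ^+ 2 ->
  inner (row i B) (xhat (Xof g V) i) =
  (\sum_j B i j * V i j) / Num.sqrt (\sum_j V i j ^+ 2).
Proof.
move=> a_gt0 b_gt0.
have sqrt_gt0 : 0 < Num.sqrt (\sum_j V i j ^+ 2) by rewrite sqrtr_gt0.
rewrite /inner /xhat rownorm_Xof mulf_neq0 ?gt_eqF // mulr_suml.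
apply: eq_bigr => j _; rewrite !mxE; field.
by rewrite gt_eqF //=; apply: contraTneq a_gt0 => ->; rewrite expr0n ltxx.
Qed.
End RowQuantities.

(* The library instance [is_derive_sum] is about the function [\sum_i h i],
   which instance resolution does not match against a pointwise sum. *)
#[local] Instance is_derive_sumr (R : realType) n (h : 'I_n -> R -> R) (x : R)
    (dh : 'I_n -> R) :
  (forall i, is_derive x (1 : R) (h i) (dh i)) ->
  is_derive x (1 : R) (fun s => \sum_i h i s) (\sum_i dh i).
Proof.
move=> dhi; have := is_derive_sum dhi.
by have -> : \sum_i h i = (fun s => \sum_i h i s) by apply/funext => s; rewrite fct_sumE.
Qed.

Section GradientFlow.
Variables (R : realType) (M N L : nat) (A : 'M[R]_(M, N)) (Y : 'M[R]_(M, L)).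
Variables (g : R -> 'cV[R]_N) (V : R -> 'M[R]_(N, L)).
Hypothesis flow : gradient_flow A Y g V.

Let Lam t := Lambda A Y (Xof (g t) (V t)).
Let P t i := \sum_j Lam t i j * V t i j.

Lemma flow_g (t : R) (i : 'I_N) : 0 <= t ->
  is_derive t (1 : R) (fun s => g s i 0) (4 * g t i 0 * P t i).
Proof.
move=> t_ge0; apply: is_derive_eq; first exact: (flow t_ge0).1.
by rewrite dloss_dgE /P /Lam; ring.
Qed.

Lemma flow_V (t : R) (i : 'I_N) (j : 'I_L) : 0 <= t ->
  is_derive t (1 : R) (fun s => V s i j) (2 * g t i 0 ^+ 2 * Lam t i j).
Proof.
move=> t_ge0; apply: is_derive_eq; first exact: (flow t_ge0).2.
by rewrite dloss_dVE /Lam; ring.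
Qed.

Lemma flow_row_sqnorm (t : R) (i : 'I_N) : 0 <= t ->
  is_derive t (1 : R) (fun s => \sum_j V s i j ^+ 2) (4 * g t i 0 ^+ 2 * P t i).
Proof.
move=> t_ge0; have dV j := flow_V i j t_ge0.
apply: is_derive_eq.
rewrite /P mulr_sumr; apply: eq_bigr => j _; rewrite /GRing.scale /=; ring.
Qed.

Lemma flow_row_balance (t : R) (k : 'I_N) : 0 <= t ->
  is_derive t (1 : R) (fun s => row_balance (g s) (V s) k) 0.
Proof.
move=> t_ge0; have dg := flow_g k t_ge0; have db := flow_row_sqnorm k t_ge0.
rewrite /row_balance; apply: is_derive_eq.
by rewrite /GRing.scale /=; field.
Qed.

Lemma flow_row_balance_const (t : R) (k : 'I_N) : 0 <= t ->
  row_balance (g t) (V t) k = row_balance (g 0) (V 0) k.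
Proof.
move=> t_ge0.
have der x : x \in `]0, t[ ->
    is_derive x (1 : R) (fun s => row_balance (g s) (V s) k) ((fun=> 0) x).
  by rewrite in_itv /= => /andP[x_gt0 _]; exact: flow_row_balance (ltW x_gt0).
have dable : {in `[0, t], forall x,
    derivable (fun s => row_balance (g s) (V s) k) x (1 : R)}.
  move=> x; rewrite in_itv /= => /andP[x_ge0 _].
  by case: (flow_row_balance k x_ge0).
have [x _] := MVT_segment t_ge0 der (derivable_within_continuous dable).
by rewrite mul0r => /eqP; rewrite subr_eq0 => /eqP.
Qed.

Lemma flow_rownorm (t : R) (i : 'I_N) : 0 <= t -> 0 < \sum_j V t i j ^+ 2 ->
  let a := g t i 0 ^+ 2 in let b := \sum_j V t i j ^+ 2 in
  is_derive t (1 : R) (fun s => rownorm (Xof (g s) (V s)) i)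
    (P t i / Num.sqrt b * (2 * a ^+ 2 + 8 * a * b)).
Proof.
move=> t_ge0 b_gt0 a b; rewrite {}/a {}/b; have dg := flow_g i t_ge0.
have dsqrt : is_derive t (1 : R) (fun s => Num.sqrt (\sum_j V s i j ^+ 2))
    ((2 * Num.sqrt (\sum_j V t i j ^+ 2))^-1 * (4 * g t i 0 ^+ 2 * P t i)).
  exact: is_derive1_comp (is_derive1_sqrt b_gt0) (flow_row_sqnorm i t_ge0).
have -> : (fun s => rownorm (Xof (g s) (V s)) i) =
          (fun s => g s i 0 ^+ 2 * Num.sqrt (\sum_j V s i j ^+ 2)).
  by apply/funext => s; rewrite rownorm_Xof.
apply: is_derive_eq; rewrite /GRing.scale /=.
set b := \sum_j V t i j ^+ 2 in b_gt0 *.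
have : Num.sqrt b ^+ 2 = b by rewrite sqr_sqrtr // ltW.
have : 0 < Num.sqrt b by rewrite sqrtr_gt0.
move: (Num.sqrt b) => q q_gt0 <-.
by field; rewrite gt_eqF.
Qed.
End GradientFlow.

Theorem lemma5p2 (R : realType) (M N L : nat)
  (A : 'M[R]_(M, N)) (Y : 'M[R]_(M, L))
  (g : R -> 'cV[R]_N) (V : R -> 'M[R]_(N, L)) (alpha_g alpha_V : R) :
  0 < alpha_g -> 0 < alpha_V ->
  g 0 = const_mx alpha_g -> V 0 = const_mx alpha_V ->
  gradient_flow A Y g V ->
  forall t : R, 0 <= t ->
  forall i : 'I_N,
    0 < g t i 0 ^+ 2 -> 0 < \sum_(m < L) V t i m ^+ 2 ->
    let X := fun s : R => Xof (g s) (V s) in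
    let c := inner (row i (Lambda A Y (X t))) (xhat (X t) i) in
    let D := derive1 (fun s : R => rownorm (X s) i) t in
    let e := eps (g t) (V t) in
    let r := rownorm (X t) i in
    (0 <= c ->
       D <= 24 * c * (e + r `^ (2 / 3)) ^+ 2 /\
       6 * c * (r ^+ 2 / (e + r `^ (2 / 3))) <= D) /\
    (c < 0 ->
       24 * c * (e + r `^ (2 / 3)) ^+ 2 <= D /\
       D <= 6 * c * (r ^+ 2 / (e + r `^ (2 / 3)))).
Proof.
move=> _ _ g0 V0 flow t t_ge0 i a_gt0 b_gt0 X c D e r.
have [_ dnorm] := flow_rownorm flow t_ge0 b_gt0.
set a := g t i 0 ^+ 2 in a_gt0 dnorm; set b := \sum_j V t i j ^+ 2 in b_gt0 dnorm.
have cE : c = (\sum_j Lambda A Y (X t) i j * V t i j) / Num.sqrt b.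
  exact: inner_row_xhat_Xof.
have DE : D = c * (2 * a ^+ 2 + 8 * a * b) by rewrite /D derive1E dnorm cE.
have rE : r = a * Num.sqrt b by rewrite /r rownorm_Xof.
have r2E : r ^+ 2 = a ^+ 2 * b by rewrite rE exprMn sqr_sqrtr // ltW.
have r_gt0 : 0 < r by rewrite rE mulr_gt0 ?sqrtr_gt0.
have p_gt0 : 0 < r `^ (2 / 3) by rewrite powR_gt0.
have p3 : (r `^ (2 / 3)) ^+ 3 = a ^+ 2 * b by rewrite powR_two_thirds_cube ?r2E // ltW.
have e_ab : `|a / 2 - b| <= e.
  have balanced k : row_balance (g t) (V t) k = row_balance (g t) (V t) i.
    rewrite !(flow_row_balance_const flow) // g0 V0 /row_balance !mxE.
    by congr (_ - _); apply: eq_bigr => j _; rewrite !mxE.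
  have -> : a / 2 - b = row_balance (g t) (V t) i by rewrite /row_balance mulrC.
  exact: row_balance_le_eps balanced.
have e_ge0 : 0 <= e by rewrite /e /eps.
rewrite DE; apply: signed_rate_bounds; first by rewrite ltr_wpDl.
- exact: growth_rate_le a_gt0 b_gt0 (ltW p_gt0) p3 e_ab.
- by rewrite r2E; exact: growth_rate_ge a_gt0 b_gt0 (ltW p_gt0) p3 e_ab.
Qed.
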